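(* Let $q$ be a nonzero complex number with $q^4\neq1$, let $\zeta,\zeta',\zeta''$ be nonzero complex numbers different from $\pm1$, and let $a,b,c,d,e,f\in\mathbb{C}$ satisfy $ade=bcf$. For $\alpha,\beta\in\mathbb{C}$ put $R(\sigma,\tau,\alpha,\beta):=\alpha R_{\sigma,\tau}+\beta R'_{\sigma,\tau}$. Then, as maps $V(\zeta)\otimes V(\zeta')\otimes V(\zeta'')\to V(\zeta'')\otimes V(\zeta')\otimes V(\zeta)$, \[\bigl(R(\zeta',\zeta'',a,b)\otimes I_{V(\zeta)}\bigr)\bigl(I_{V(\zeta')}\otimes R(\zeta,\zeta'',c,d)\bigr)\bigl(R(\zeta,\zeta',e,f)\otimes I_{V(\zeta'')}\bigr)\] \[=\bigl(I_{V(\zeta'')}\otimes R(\zeta,\zeta',e,f)\bigr)\bigl(R(\zeta,\zeta'',c,d)\otimes I_{V(\zeta')}\bigr)\bigl(I_{V(\zeta)}\otimes R(\zeta',\zeta'',a,b)\bigr).\]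
   Context: $V(\zeta)$ is the two-dimensional super vector space with basis $x$ (even), $y$ (odd), which carries the structure of the Kac module of $U_q(\mathfrak{gl}(1|1))$ (or $U_q(\mathfrak{sl}(1|1))$) with central element $W$ acting by $\zeta$; both sides above are module homomorphisms. For nonzero $\sigma,\tau$, with $x,y$ the basis of $V(\sigma)$ and $\tilde x,\tilde y$ that of $V(\tau)$, the even linear maps $R_{\sigma,\tau},R'_{\sigma,\tau}:V(\sigma)\otimes V(\tau)\to V(\tau)\otimes V(\sigma)$ are \[R_{\sigma,\tau}:\ x\otimes\tilde x\mapsto \tilde x\otimes x,\ x\otimes\tilde y\mapsto \sigma\,\tilde y\otimes x,\ y\otimes\tilde x\mapsto \tau\,\tilde x\otimes y+(1-\sigma^2)\,\tilde y\otimes x,\ y\otimes\tilde y\mapsto-\sigma\tau\,\tilde y\otimes y,\] \[R'_{\sigma,\tau}:\ x\otimes\tilde x\mapsto -\sigma\tau\,\tilde x\otimes x,\ x\otimes\tilde y\mapsto (1-\tau^2)\,\tilde x\otimes y-\tau\,\tilde y\otimes x,\ y\otimes\tilde x\mapsto-\sigma\,\tilde x\otimes y,\ y\otimes\tilde y\mapsto\tilde y\otimes y.\] $I_X$ denotes the identity of $X$. *)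

From mathcomp Require Import all_boot all_algebra complex Rstruct.
Set Implicit Arguments. Unset Strict Implicit. Unset Printing Implicit Defensive.
Import GRing.Theory Num.Theory.
Local Open Scope ring_scope.


(* Basis of V(zeta): false = x (even), true = y (odd).
   A vector of V(a) (x) V(b) (x) V(c) is its coefficient function on the
   basis tensors e_i (x) e_j (x) e_k; same for two-fold tensors.
   An (even) map V(s)(x)V(t) -> V(t)(x)V(s) is given by its matrix
   coefficients M i j k l = coefficient of (e~_k (x) e_l) in M(e_i (x) e~_j). *)
Definition vec3 := bool -> bool -> bool -> (Rdefinitions.R)[i].
Definition op2 := bool -> bool -> bool -> bool -> (Rdefinitions.R)[i].

Definition Rmat (s t : (Rdefinitions.R)[i]) : op2 := fun i j k l =>
  match i, j, k, l with
  | false, false, false, false => 1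
  | false, true,  true,  false => s
  | true,  false, false, true  => t
  | true,  false, true,  false => 1 - s ^+ 2
  | true,  true,  true,  true  => - (s * t)
  | _, _, _, _ => 0
  end.

Definition Rmat' (s t : (Rdefinitions.R)[i]) : op2 := fun i j k l =>
  match i, j, k, l with
  | false, false, false, false => - (s * t)
  | false, true,  false, true  => 1 - t ^+ 2
  | false, true,  true,  false => - t
  | true,  false, false, true  => - s
  | true,  true,  true,  true  => 1
  | _, _, _, _ => 0
  end.

Definition Rab (s t al be : (Rdefinitions.R)[i]) : op2 :=
  fun i j k l => al * Rmat s t i j k l + be * Rmat' s t i j k l.

(* M (x) I  and  I (x) M  on three-fold tensors.  All maps involved are even,
   so no Koszul signs arise. *)
Definition tensorI (M : op2) (v : vec3) : vec3 := fun k l m =>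
  \sum_(i : bool) \sum_(j : bool) M i j k l * v i j m.
Definition Itensor (M : op2) (v : vec3) : vec3 := fun k l m =>
  \sum_(i : bool) \sum_(j : bool) M i j l m * v k i j.

(* The defect lhs - rhs of the braid relation is trilinear in the three
   operators, so for R(., ., alpha, beta) = alpha R + beta R' it splits into
   eight defects, one for each choice of R or R' in each slot.  Six of them
   vanish: R and R' each satisfy the braid relation, and so do four of the
   mixed products.  The two that survive, R,R',R and R',R,R', have opposite
   defects and come with the coefficients ade and bcf, so the total defect is
   (ade - bcf) times a single defect. *)

From mathcomp Require Import all_boot all_algebra complex Rstruct.
From mathcomp Require Import ring.
From Stdlib Require Import FunctionalExtensionality.
Import GRing.Theory Num.Theory.
Local Open Scope ring_scope.

Local Notation C := (Rdefinitions.R)[i].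

Lemma vec3_ext (v w : vec3) : (forall k l m, v k l m = w k l m) -> v = w.
Proof. by move=> vw; do 3!apply: functional_extensionality => ?; apply: vw. Qed.

Lemma tensorIE (M : op2) (v : vec3) k l m : tensorI M v k l m =
  M false false k l * v false false m + M false true k l * v false true m
  + (M true false k l * v true false m + M true true k l * v true true m).
Proof. by rewrite /tensorI !big_bool /=; ring. Qed.

Lemma ItensorE (M : op2) (v : vec3) k l m : Itensor M v k l m =
  M false false l m * v k false false + M false true l m * v k false true
  + (M true false l m * v k true false + M true true l m * v k true true).
Proof. by rewrite /Itensor !big_bool /=; ring. Qed.

Definition op_comb (a : C) (M : op2) (b : C) (N : op2) : op2 :=
  fun i j k l => a * M i j k l + b * N i j k l.

Definition vec_comb (a : C) (v : vec3) (b : C) (w : vec3) : vec3 :=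
  fun k l m => a * v k l m + b * w k l m.

Lemma Rab_op_comb s t a b : Rab s t a b = op_comb a (Rmat s t) b (Rmat' s t).
Proof. by []. Qed.

Lemma tensorI_op_comb a M b N v :
  tensorI (op_comb a M b N) v = vec_comb a (tensorI M v) b (tensorI N v).
Proof. by apply: vec3_ext => k l m; rewrite /vec_comb !tensorIE /op_comb; ring. Qed.

Lemma Itensor_op_comb a M b N v :
  Itensor (op_comb a M b N) v = vec_comb a (Itensor M v) b (Itensor N v).
Proof. by apply: vec3_ext => k l m; rewrite /vec_comb !ItensorE /op_comb; ring. Qed.

Lemma tensorI_vec_comb M a v b w :
  tensorI M (vec_comb a v b w) = vec_comb a (tensorI M v) b (tensorI M w).
Proof. by apply: vec3_ext => k l m; rewrite /vec_comb !tensorIE; ring. Qed.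

Lemma Itensor_vec_comb M a v b w :
  Itensor M (vec_comb a v b w) = vec_comb a (Itensor M v) b (Itensor M w).
Proof. by apply: vec3_ext => k l m; rewrite /vec_comb !ItensorE; ring. Qed.

Definition braid_lhs (X Y Z : op2) (v : vec3) : vec3 :=
  tensorI X (Itensor Y (tensorI Z v)).

Definition braid_rhs (X Y Z : op2) (v : vec3) : vec3 :=
  Itensor Z (tensorI Y (Itensor X v)).

Definition braid_defect (X Y Z : op2) (v : vec3) : vec3 :=
  fun k l m => braid_lhs X Y Z v k l m - braid_rhs X Y Z v k l m.

Lemma braid_defect0 {X Y Z : op2} {v : vec3} :
  braid_lhs X Y Z v = braid_rhs X Y Z v -> forall k l m, braid_defect X Y Z v k l m = 0.
Proof. by move=> braid k l m; rewrite /braid_defect braid subrr. Qed.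

Lemma braid_defect_trilinear X X' Y Y' Z Z' a b c d e f v k l m :
  braid_defect (op_comb a X b X') (op_comb c Y d Y') (op_comb e Z f Z') v k l m =
    a * c * e * braid_defect X Y Z v k l m + a * c * f * braid_defect X Y Z' v k l m
  + a * d * e * braid_defect X Y' Z v k l m + a * d * f * braid_defect X Y' Z' v k l m
  + b * c * e * braid_defect X' Y Z v k l m + b * c * f * braid_defect X' Y Z' v k l m
  + b * d * e * braid_defect X' Y' Z v k l m + b * d * f * braid_defect X' Y' Z' v k l m.
Proof.
rewrite /braid_defect /braid_lhs /braid_rhs.
rewrite !(tensorI_op_comb, Itensor_op_comb, tensorI_vec_comb, Itensor_vec_comb) /vec_comb.
ring.
Qed.

Ltac braid_by_coordinates :=
  rewrite /braid_lhs /braid_rhs !(tensorIE, ItensorE);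
  cbv beta iota delta [Rmat Rmat']; ring.

Section BraidRelations.

Variables (s t u : C) (v : vec3).

Lemma braid_RRR :
  braid_lhs (Rmat t u) (Rmat s u) (Rmat s t) v
  = braid_rhs (Rmat t u) (Rmat s u) (Rmat s t) v.
Proof. by apply: vec3_ext; case; case; case; braid_by_coordinates. Qed.

Lemma braid_R'R'R' :
  braid_lhs (Rmat' t u) (Rmat' s u) (Rmat' s t) v
  = braid_rhs (Rmat' t u) (Rmat' s u) (Rmat' s t) v.
Proof. by apply: vec3_ext; case; case; case; braid_by_coordinates. Qed.

Lemma braid_RRR' :
  braid_lhs (Rmat t u) (Rmat s u) (Rmat' s t) v
  = braid_rhs (Rmat t u) (Rmat s u) (Rmat' s t) v.
Proof. by apply: vec3_ext; case; case; case; braid_by_coordinates. Qed.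

Lemma braid_RR'R' :
  braid_lhs (Rmat t u) (Rmat' s u) (Rmat' s t) v
  = braid_rhs (Rmat t u) (Rmat' s u) (Rmat' s t) v.
Proof. by apply: vec3_ext; case; case; case; braid_by_coordinates. Qed.

Lemma braid_R'RR :
  braid_lhs (Rmat' t u) (Rmat s u) (Rmat s t) v
  = braid_rhs (Rmat' t u) (Rmat s u) (Rmat s t) v.
Proof. by apply: vec3_ext; case; case; case; braid_by_coordinates. Qed.

Lemma braid_R'R'R :
  braid_lhs (Rmat' t u) (Rmat' s u) (Rmat s t) v
  = braid_rhs (Rmat' t u) (Rmat' s u) (Rmat s t) v.
Proof. by apply: vec3_ext; case; case; case; braid_by_coordinates. Qed.

Lemma braid_defect_RR'R k l m :
  braid_defect (Rmat t u) (Rmat' s u) (Rmat s t) v k l m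
  = - braid_defect (Rmat' t u) (Rmat s u) (Rmat' s t) v k l m.
Proof. by rewrite /braid_defect; move: k l m; case; case; case; braid_by_coordinates. Qed.

Lemma braid_defect_Rab a b c d e f k l m : a * d * e = b * c * f ->
  braid_defect (Rab t u a b) (Rab s u c d) (Rab s t e f) v k l m = 0.
Proof.
move=> adeE; rewrite !Rab_op_comb braid_defect_trilinear.
rewrite (braid_defect0 braid_RRR) (braid_defect0 braid_RRR') (braid_defect0 braid_RR'R').
rewrite (braid_defect0 braid_R'RR) (braid_defect0 braid_R'R'R) (braid_defect0 braid_R'R'R').
by rewrite braid_defect_RR'R adeE; ring.
Qed.

End BraidRelations.

Theorem theorem6p2 (q z z' z'' a b c d e f : (Rdefinitions.R)[i]) :
  q != 0 -> q ^+ 4 != 1 ->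
  z != 0 -> z != 1 -> z != -1 ->
  z' != 0 -> z' != 1 -> z' != -1 ->
  z'' != 0 -> z'' != 1 -> z'' != -1 ->
  a * d * e = b * c * f ->
  forall v : vec3,
    tensorI (Rab z' z'' a b) (Itensor (Rab z z'' c d) (tensorI (Rab z z' e f) v))
    = Itensor (Rab z z' e f) (tensorI (Rab z z'' c d) (Itensor (Rab z' z'' a b) v)).
Proof.
move=> _ _ _ _ _ _ _ _ _ _ _ adeE v; apply: vec3_ext => k l m.
by apply/eqP; rewrite -subr_eq0; apply/eqP; exact: braid_defect_Rab adeE.
Qed.
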